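(* Let $m\ge 2$ and let $K\neq\Delta_{[m]}$ be a simplicial complex on $[m]$. Then $$\max\bigl(m-1,\ \chi(K),\ \chi(K^\vee)\bigr)\le \chi(\mathrm{Bier}(K))\le m.$$
   Context: A simplicial complex $K$ on $[m]=\{1,\dots,m\}$ is a nonempty family of subsets of $[m]$ closed under taking subsets. $V(K)=\{i:\{i\}\in K\}$ is its set of (geometric) vertices; elements $i\in[m]$ with $\{i\}\notin K$ are ghost vertices. $\Delta_{[m]}=2^{[m]}$. Let $[m']=\{1',\dots,m'\}$ be a disjoint copy of $[m]$ and for $I\subseteq[m]$ let $I'=\{i':i\in I\}$. For $K\ne\Delta_{[m]}$ the Alexander dual $K^\vee$ is the simplicial complex on $[m']$ with $J'\in K^\vee$ iff $[m]\setminus J\notin K$. The Bier sphere $\mathrm{Bier}(K)$ is the simplicial complex on $[m]\sqcup[m']$ whose faces are $I\sqcup J'$ with $I\in K$, $J'\in K^\vee$, $I\cap J=\varnothing$; it is a PL sphere of dimension $m-2$. The chromatic number $\chi(L)$ of a simplicial complex $L$ is the least number of colors in a map $c\colon V(L)\to C$ with $c(u)\ne c(v)$ whenever $\{u,v\}\in L$ (i.e. the chromatic number of the 1-skeleton). *)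

From mathcomp Require Import all_boot.
Set Implicit Arguments. Unset Strict Implicit. Unset Printing Implicit Defensive.

(* A simplicial complex on the finite ground set T (ghost vertices allowed):
   a nonempty family of subsets closed under taking subsets. *)
Definition is_complex (T : finType) (K : {set {set T}}) : Prop :=
  K != set0 /\ forall A B : {set T}, A \in K -> B \subset A -> B \in K.

(* Alexander dual, realized on a copy of the same index type:
   J' \in K^vee  iff  [m] \ J \notin K. *)
Definition alex_dual (m : nat) (K : {set {set 'I_m}}) : {set {set 'I_m}} :=
  [set J : {set 'I_m} | ~: J \notin K].

(* Bier sphere on [m] ⊔ [m'] = 'I_m + 'I_m (inl = unprimed, inr = primed). *)
Definition bier (m : nat) (K : {set {set 'I_m}}) : {set {set ('I_m + 'I_m)}} :=
  [set S : {set ('I_m + 'I_m)} |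
     [&& [set i | inl i \in S] \in K,
         [set j | inr j \in S] \in alex_dual K &
         [disjoint [set i | inl i \in S] & [set j | inr j \in S]]]].

(* k-colorability of (the 1-skeleton of) L: a map from the geometric vertices
   to k colors (ghost vertices are sent to None), distinct on edges. *)
Definition colorable (T : finType) (L : {set {set T}}) (k : nat) : bool :=
  [exists c : {ffun T -> option 'I_k},
     [forall v, ([set v] \in L) ==> (c v != None)] &&
     [forall u, forall v, ((u != v) && ([set u; v] \in L)) ==> (c u != c v)]].

Lemma colorable_card (T : finType) (L : {set {set T}}) :
  exists k, colorable L k.
Proof.
exists #|T|; apply/existsP; exists [ffun v => Some (enum_rank v)].
apply/andP; split; apply/forallP => u.
  by apply/implyP; rewrite ffunE.
apply/forallP => v; apply/implyP => /andP [uv _].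
by rewrite !ffunE; apply: contra uv => /eqP [] /enum_rank_inj ->.
Qed.

Definition chi (T : finType) (L : {set {set T}}) : nat :=
  ex_minn (colorable_card L).

(* Restricting a coloring of Bier(K) to the unprimed (resp. primed) vertices colors K
   (resp. K^vee), and coloring both copies of i by i colors Bier(K) since no face contains
   both i and i'. For the bound m - 1: take a face I of K of maximal size and i outside it;
   then i |: I is not in K, so the complement of i |: I is a face of K^vee, and together
   with I it gives a face of Bier(K) with m - 1 vertices, all pairwise adjacent. *)
From mathcomp Require Import all_boot.
Set Implicit Arguments. Unset Strict Implicit. Unset Printing Implicit Defensive.

Section Coloring.
Variable T : finType.
Implicit Types (L : {set {set T}}) (A : {set T}) (k : nat).

Lemma colorable_chi L : colorable L (chi L).
Proof. by rewrite /chi; case: ex_minnP. Qed.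

Lemma chi_min L k : colorable L k -> chi L <= k.
Proof. by rewrite /chi; case: ex_minnP => n _; apply. Qed.

Lemma colorable_face_card L A k :
  (forall S : {set T}, S \subset A -> S \in L) -> colorable L k -> #|A| <= k.
Proof.
move=> faceA /existsP [c /andP [/forallP c_vertex /forallP c_edge]].
have c_inj : {in A &, injective c}.
  move=> u v uA vA; apply: contra_eq => uv.
  move/forallP: (c_edge u) => /(_ v) /implyP; apply; rewrite uv faceA //.
  by apply/subsetP => w; rewrite !inE => /orP [] /eqP ->.
have -> : k = #|[set~ (None : option 'I_k)]|.
  by rewrite cardsC1 card_option card_ord.
rewrite -(card_in_imset c_inj) subset_leq_card //.
apply/subsetP => _ /imsetP [v vA ->]; rewrite !inE.
by move/implyP: (c_vertex v); apply; rewrite faceA ?sub1set.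
Qed.

Lemma colorable_pullback (T' : finType) (L : {set {set T}}) (L' : {set {set T'}})
    (h : T -> T') k :
  injective h ->
  (forall v, [set v] \in L -> [set h v] \in L') ->
  (forall u v, u != v -> [set u; v] \in L -> [set h u; h v] \in L') ->
  colorable L' k -> colorable L k.
Proof.
move=> h_inj h_vertex h_edge /existsP [c /andP [/forallP c_vertex /forallP c_edge]].
apply/existsP; exists [ffun v => c (h v)]; apply/andP; split.
  apply/forallP => v; apply/implyP => Lv; rewrite ffunE.
  by move/implyP: (c_vertex (h v)); apply; apply: h_vertex.
apply/forallP => u; apply/forallP => v; apply/implyP => /andP [uv Luv].
rewrite !ffunE; move/forallP: (c_edge (h u)) => /(_ (h v)) /implyP; apply.
by rewrite (inj_eq h_inj) uv h_edge.
Qed.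

End Coloring.

Section Bier.
Variables (m : nat) (K : {set {set 'I_m}}).
Hypotheses (complexK : is_complex K) (K_neq_full : K != [set: {set 'I_m}]).
Implicit Types (I J : {set 'I_m}) (S : {set 'I_m + 'I_m}).

Let subK I J : I \in K -> J \subset I -> J \in K.
Proof. by case: complexK => _; apply. Qed.

Lemma set0_in_complex : set0 \in K.
Proof. by case: complexK => /set0Pn [A KA] _; apply: subK KA (sub0set A). Qed.

Lemma setT_notin_complex : setT \notin K.
Proof.
apply: contra K_neq_full => KT; apply/eqP/setP => A.
by rewrite inE (subK KT) ?subsetT.
Qed.

Lemma set0_in_alex_dual : set0 \in alex_dual K.
Proof. by rewrite inE setC0 setT_notin_complex. Qed.

Lemma mem_bier_sub S I J :
  I \in K -> J \in alex_dual K -> [disjoint I & J] ->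
  [set i | inl i \in S] \subset I -> [set j | inr j \in S] \subset J ->
  S \in bier K.
Proof.
move=> KI dualJ dis_IJ sub_I sub_J; rewrite inE; apply/and3P; split.
- exact: subK KI sub_I.
- by move: dualJ; rewrite !inE; apply: contra => KJ; rewrite (subK KJ) ?setCS.
- exact: disjointWl sub_I (disjointWr sub_J dis_IJ).
Qed.

Lemma bier_subset_closed S S' : S \in bier K -> S' \subset S -> S' \in bier K.
Proof.
rewrite inE => /and3P [KI dualJ dis_IJ] sub_S; apply: (mem_bier_sub KI dualJ dis_IJ).
  by apply/subsetP => i; rewrite !inE => /(subsetP sub_S).
by apply/subsetP => j; rewrite !inE => /(subsetP sub_S).
Qed.

Lemma bier_face_card : exists2 S, S \in bier K & #|S| = m.-1.
Proof.
have [I KI maxI] := @arg_maxnP _ set0 (mem K) (fun I => #|I|) set0_in_complex.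
have [i notIi] : exists i, i \notin I.
  apply/existsP; apply: contraR setT_notin_complex => /existsPn allI.
  by rewrite (_ : setT = I) //; apply/setP => x; rewrite inE; exact/esym/negbNE/allI.
have dualJ : ~: (i |: I) \in alex_dual K.
  by rewrite inE setCK; apply/negP => /maxI /=; rewrite cardsU1 notIi add1n ltnn.
pose f x : 'I_m + 'I_m := if x \in I then inl x else inr x.
have f_inj : injective f by move=> x y; rewrite /f; do 2 case: ifP => _ //; case.
exists (f @: [set~ i]); last by rewrite (card_imset _ f_inj) cardsC1 card_ord.
apply: (mem_bier_sub KI dualJ); first by rewrite disjoints_subset setCK subsetUr.
  apply/subsetP => a; rewrite inE => /imsetP [x _].
  by rewrite /f; case: ifP => // xI [->].
apply/subsetP => a; rewrite inE => /imsetP [x]; rewrite !inE /f.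
by case: ifP => // xI xi [->]; rewrite xI orbF.
Qed.

Lemma colorable_bier : colorable (bier K) m.
Proof.
pose c (v : 'I_m + 'I_m) := Some (match v with inl i => i | inr i => i end).
apply/existsP; exists [ffun v => c v]; apply/andP; split.
  by apply/forallP => v; apply/implyP; rewrite ffunE.
apply/forallP => u; apply/forallP => v; apply/implyP => /andP [uv].
rewrite !ffunE inE => /and3P [_ _]; rewrite /c.
case: u v uv => [a|a] [b|b] //= _; apply: contraTN => /eqP [<-];
  by apply/negP => /(@disjointFr _ _ _ a); rewrite !inE !eqxx ?orbT => /(_ isT).
Qed.

Lemma mem_bier_inl I : I \in K -> inl @: I \in bier K.
Proof.
move=> KI; apply: (mem_bier_sub KI set0_in_alex_dual).
- by rewrite disjoints_subset setC0 subsetT.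
- by apply/subsetP => x; rewrite inE mem_imset //; apply: inl_inj.
- by apply/subsetP => x; rewrite inE => /imsetP [].
Qed.

Lemma mem_bier_inr J : J \in alex_dual K -> inr @: J \in bier K.
Proof.
move=> dualJ; apply: (mem_bier_sub set0_in_complex dualJ).
- by rewrite disjoints_subset sub0set.
- by apply/subsetP => x; rewrite inE => /imsetP [].
- by apply/subsetP => x; rewrite inE mem_imset //; apply: inr_inj.
Qed.

Lemma colorable_complex_of_bier k : colorable (bier K) k -> colorable K k.
Proof.
apply: (colorable_pullback inl_inj) => [v|u v _] /mem_bier_inl;
  by rewrite ?imsetU1 imset_set1.
Qed.

Lemma colorable_alex_dual_of_bier k : colorable (bier K) k -> colorable (alex_dual K) k.
Proof.
apply: (colorable_pullback inr_inj) => [v|u v _] /mem_bier_inr;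
  by rewrite ?imsetU1 imset_set1.
Qed.

End Bier.

Theorem mainTheorem1 (m : nat) (K : {set {set 'I_m}}) :
  2 <= m -> is_complex K -> K != [set: {set 'I_m}] ->
  maxn (m - 1) (maxn (chi K) (chi (alex_dual K))) <= chi (bier K) <= m.
Proof.
move=> _ complexK K_neq_full.
rewrite chi_min ?colorable_bier // andbT !geq_max subn1.
have col_bier := colorable_chi (bier K).
have [S bierS <-] := bier_face_card complexK K_neq_full.
rewrite (colorable_face_card _ col_bier); last first.
  by move=> S'; apply: bier_subset_closed bierS.
rewrite /= !chi_min //.
- exact: (colorable_alex_dual_of_bier complexK col_bier).
- exact: (colorable_complex_of_bier complexK K_neq_full col_bier).
Qed.
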